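(* Let $M=\langle \mathcal S,\mathcal A,T,U,s_0,h,\dots\rangle$ be a fixed-horizon constrained or chance-constrained MDP instance (as described in the context) with horizon $h\ge 1$ and $U_{\max}:=\max_{s\in\mathcal S,a\in\mathcal A}U(s,a)>0$, let $\epsilon>0$, and for $k=0,\dots,h-1$ let $$L_k:=\frac{\epsilon\, U_{\max}}{(h-k)(\ln h+1)}.$$ Let $\pi^*$ be an optimal deterministic policy of $M$. Then for every $k\in\{0,\dots,h-1\}$ and every state $s_k\in\mathcal S_k$, $$\overline v_{\pi^*}(s_k)\ \ge\ v_{\pi^*}(s_k)-\sum_{k'=k}^{h-1}L_{k'}.$$
   Context: An MDP instance has finite state set $\mathcal S$, finite action set $\mathcal A$, transition function $T:\mathcal S\times\mathcal A\times\mathcal S\to[0,1]$ with $T(s,a,s')=\Pr(s'\mid s,a)$, non-negative utility $U:\mathcal S\times\mathcal A\to\mathbb R_+$, initial state $s_0$ and horizon $h$. $\mathcal S_0=\{s_0\}$ and $\mathcal S_{k+1}$ is the set of states reachable with positive probability at time $k+1$ from some state of $\mathcal S_k$ under some action. A deterministic policy is a map $\pi:\mathcal S\times\{0,\dots,h-1\}\to\mathcal A$; write $\pi(s_k)$ for the action at state $s_k$ at time $k$. Its value function is $v_\pi(s_h)=0$ and $v_\pi(s_k)=\sum_{s_{k+1}\in\mathcal S_{k+1}}T(s_k,\pi(s_k),s_{k+1})v_\pi(s_{k+1})+U(s_k,\pi(s_k))$ for $k=h-1,\dots,0$. The discretized value is defined by $\overline v_\pi(s_h)=0$ and, for $k=h-1,\dots,0$,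 $$\overline v_\pi(s_k)=\Big\lfloor \tfrac{1}{L_k}\Big(\sum_{s_{k+1}\in\mathcal S_{k+1}}T(s_k,\pi(s_k),s_{k+1})\,\overline v_\pi(s_{k+1})+U(s_k,\pi(s_k))\Big)\Big\rfloor L_k.$$ An optimal deterministic policy is one maximizing $v_\pi(s_0)$ among deterministic policies satisfying the problem's constraint (either an expected-cost constraint $\mathbb E[\sum_{k=0}^{h-1}C(S_k,\pi(S_k))]\le P$ with non-negative cost $C$ and $P>0$, or a chance constraint bounding the failure probability by $\Delta$). *)

From HB Require Import structures.
From mathcomp Require Import all_boot all_order all_algebra.
From mathcomp Require Import reals exp.
Set Implicit Arguments. Unset Strict Implicit. Unset Printing Implicit Defensive.
Import Order.TTheory GRing.Theory Num.Theory.
Local Open Scope ring_scope.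

Section MDP.
Variables (R : realType) (S A : finType).
Variables (T : S -> A -> S -> R) (U : S -> A -> R) (s0 : S) (h : nat).

(* deterministic time-dependent policy: pi s k = action at state s, time k *)
Definition policy := S -> nat -> A.

Fixpoint reach (k : nat) : {set S} :=
  match k with
  | 0 => [set s0]
  | k'.+1 => [set s' | [exists s in reach k', exists a, 0 < T s a s']]
  end.

(* generic backward recursion: bw step n s = value at time h - n, where
   step k s w computes the value at (s,k) from the values w at time k+1 *)
Fixpoint bw (step : nat -> S -> (S -> R) -> R) (n : nat) (s : S) : R :=
  match n with
  | 0 => 0
  | n'.+1 => step (h - n)%N s (bw step n')
  end.

Definition bellman (pi : policy) (k : nat) (s : S) (w : S -> R) : R :=
  \sum_(s' in reach k.+1) T s (pi s k) s' * w s' + U s (pi s k).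

Definition value (pi : policy) (k : nat) (s : S) : R :=
  bw (bellman pi) (h - k)%N s.

Definition dvalue (L : nat -> R) (pi : policy) (k : nat) (s : S) : R :=
  bw (fun k s w => (Num.floor (bellman pi k s w / L k))%:~R * L k) (h - k)%N s.

Definition trajprob (pi : policy) (tau : h.+1.-tuple S) : R :=
  (tnth tau ord0 == s0)%:R *
  \prod_(k < h) T (nth s0 tau k) (pi (nth s0 tau k) k) (nth s0 tau k.+1).

Definition expected_cost (C : S -> A -> R) (pi : policy) : R :=
  \sum_(tau : h.+1.-tuple S)
     trajprob pi tau * \sum_(k < h) C (nth s0 tau k) (pi (nth s0 tau k) k).

Definition failure_prob (F : {set S}) (pi : policy) : R :=
  \sum_(tau : h.+1.-tuple S | [exists k : 'I_h.+1, tnth tau k \in F])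
     trajprob pi tau.

Inductive constraint :=
  | CostConstraint of (S -> A -> R) & R      (* cost C, budget P *)
  | ChanceConstraint of {set S} & R.         (* failure states F, bound Delta *)

Definition wf_constraint (c : constraint) : Prop :=
  match c with
  | CostConstraint C P => (forall s a, 0 <= C s a) /\ 0 < P
  | ChanceConstraint _ _ => True
  end.

Definition feasible (c : constraint) (pi : policy) : Prop :=
  match c with
  | CostConstraint C P => expected_cost C pi <= P
  | ChanceConstraint F D => failure_prob F pi <= D
  end.

Definition optimal (c : constraint) (pi : policy) : Prop :=
  feasible c pi /\ forall pi', feasible c pi' -> value pi' 0 s0 <= value pi 0 s0.

Definition Umax : R := \big[Num.max/0]_(s : S) \big[Num.max/0]_(a : A) U s a.

Definition Lk (eps : R) (k : nat) : R :=
  eps * Umax / ((h - k)%N%:R * (ln (h%:R : R) + 1)).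

End MDP.

From HB Require Import structures.
From mathcomp Require Import all_boot all_order all_algebra.
From mathcomp Require Import reals exp.
Set Implicit Arguments. Unset Strict Implicit. Unset Printing Implicit Defensive.
Import Order.TTheory GRing.Theory Num.Theory.
Local Open Scope ring_scope.

(* Rounding down to a multiple of L loses less than L at each backward step,
   and since the transition probabilities out of a state sum to at most 1, the
   loss accumulated at later steps is passed back without amplification; by
   induction on the remaining horizon the total error from time k on is at most
   L_k + ... + L_(h-1).  Neither optimality of the policy nor reachability
   of s_k plays a role. *)

Lemma floor_mulr_ge (R : realType) (x L : R) : 0 < L ->
  x - L <= (Num.floor (x / L))%:~R * L.
Proof.
move=> L_gt0; rewrite lerBlDr -[X in _ <= _ + X]mul1r -mulrDl -ler_pdivrMr //.
by rewrite ltW // -[1]/(1%:~R) -intrD floorD1_gt.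
Qed.

Lemma Lk_gt0 (R : realType) (S A : finType) (U : S -> A -> R) (h k : nat) (eps : R) :
  0 < Umax U -> 0 < eps -> (k < h)%N -> 0 < Lk U h eps k.
Proof.
move=> Umax_gt0 eps_gt0 kh; rewrite /Lk divr_gt0 ?mulr_gt0 // ?ltr0n ?subn_gt0 //.
by rewrite ltr_wpDl // ln_ge0 // ler1n (leq_trans _ kh).
Qed.

Section Discretization.
Variables (R : realType) (S A : finType).
Variables (T : S -> A -> S -> R) (U : S -> A -> R) (s0 : S) (h : nat).
Variables (pi : policy S A) (L : nat -> R).
Hypothesis T_ge0 : forall s a s', 0 <= T s a s'.
Hypothesis T_sum1 : forall s a, \sum_(s' : S) T s a s' = 1.
Hypothesis L_gt0 : forall k, (k < h)%N -> 0 < L k.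

Lemma sum_T_le1 (B : {set S}) s a : \sum_(s' in B) T s a s' <= 1.
Proof.
rewrite -(T_sum1 s a) [leRHS](bigID (mem B)) /= lerDl.
by rewrite sumr_ge0 // => s' _; apply: T_ge0.
Qed.

Lemma bellman_le k s (w1 w2 : S -> R) : (forall s', w1 s' <= w2 s') ->
  bellman T U s0 pi k s w1 <= bellman T U s0 pi k s w2.
Proof.
move=> le_w; rewrite /bellman lerD2r.
by apply: ler_sum => s' _; rewrite ler_wpM2l.
Qed.

Lemma bellman_subr k s (w : S -> R) (c : R) : 0 <= c ->
  bellman T U s0 pi k s w - c <= bellman T U s0 pi k s (fun s' => w s' - c).
Proof.
move=> c_ge0; rewrite /bellman addrAC lerD2r.
under [leRHS]eq_bigr do rewrite mulrBr.
by rewrite sumrB -mulr_suml lerD2l lerN2 ler_piMl // sum_T_le1.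
Qed.

Let dstep k s w := (Num.floor (bellman T U s0 pi k s w / L k))%:~R * L k.

Lemma bw_floor_ge n s : (n <= h)%N ->
  bw h (bellman T U s0 pi) n s - \sum_(h - n <= i < h) L i <= bw h dstep n s.
Proof.
elim: n s => [|n IHn] s n_le_h /=; first by rewrite subn0 big_geq // subrr.
have k_lt_h : (h - n.+1 < h)%N by rewrite ltn_subrL /=; apply: leq_trans n_le_h.
rewrite (big_ltn k_lt_h) subnSK //.
set SL := \sum_(h - n <= i < h) L i.
have SL_ge0 : 0 <= SL.
  rewrite /SL big_nat_cond sumr_ge0 // => i /andP[/andP[_ i_lt_h] _].
  exact/ltW/L_gt0.
apply: le_trans _ (floor_mulr_ge _ (L_gt0 k_lt_h)).
rewrite opprD addrA addrAC lerD2r.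
apply: le_trans (bellman_subr _ _ _ SL_ge0) _.
by apply: bellman_le => s'; apply: IHn; apply: ltnW.
Qed.

End Discretization.

Theorem lemma3 (R : realType) (S A : finType)
  (T : S -> A -> S -> R) (U : S -> A -> R) (s0 : S) (h : nat)
  (c : constraint R S A) (eps : R) (pistar : policy S A) :
  (forall s a s', 0 <= T s a s' <= 1) ->
  (forall s a, \sum_(s' : S) T s a s' = 1) ->
  (forall s a, 0 <= U s a) ->
  (1 <= h)%N ->
  0 < Umax U ->
  wf_constraint c ->
  0 < eps ->
  optimal T U s0 h c pistar ->
  forall (k : nat) (sk : S), (k < h)%N -> sk \in reach T s0 k ->
    dvalue T U s0 h (Lk U h eps) pistar k sk >=
      value T U s0 h pistar k sk - \sum_(k <= k' < h) Lk U h eps k'.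
Proof.
move=> T_01 T_sum1 _ _ Umax_gt0 _ eps_gt0 _ k sk k_lt_h _.
have T_ge0 s a s' : 0 <= T s a s' by case/andP: (T_01 s a s').
have {2}-> : k = (h - (h - k))%N by rewrite subKn // ltnW.
apply: bw_floor_ge => //; last exact: leq_subr.
by move=> k'; apply: Lk_gt0.
Qed.
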